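(* For each $f\in\Bbbk[x]$ and $\lambda\in\Bbbk^\times$ there is a unique algebra automorphism $\phi_{f,\lambda}:A\to A$ with $\phi_{f,\lambda}(x)=\lambda x$ and $\phi_{f,\lambda}(y)=\lambda^{N-1}y+f$. Moreover, the map $(f,\lambda)\mapsto\phi_{f,\lambda}$ is an isomorphism of groups from $\Bbbk[x]\bowtie\Bbbk^\times$ onto the automorphism group $\mathrm{Aut}(A)$ (with composition as product).
   Context: Let $\Bbbk$ be a field of characteristic zero and $N\geq1$ an integer. Let $A=A_N$ be the $\Bbbk$-algebra generated by $x,y$ subject to the relation $yx-xy=x^N$. For $g\in\Bbbk[x]$ and $\lambda\in\Bbbk^\times$ write $g\cdot\lambda$ for the polynomial $g(\lambda x)$. The group $\Bbbk[x]\bowtie\Bbbk^\times$ has underlying set $\Bbbk[x]\times\Bbbk^\times$ and product $(f,\lambda)\cdot(g,\mu)=(\mu^{N-1}f+g\cdot\lambda,\ \lambda\mu)$. *)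

From HB Require Import structures.
From mathcomp Require Import all_boot all_order all_algebra.
Set Implicit Arguments. Unset Strict Implicit. Unset Printing Implicit Defensive.
Import Order.TTheory GRing.Theory Num.Theory.
Local Open Scope ring_scope.

Definition is_alg_hom (k : fieldType) (A B : algType k) (f : A -> B) : Prop :=
  [/\ forall a b, f (a + b) = f a + f b,
      forall (c : k) a, f (c *: a) = c *: f a,
      forall a b, f (a * b) = f a * f b
    & f 1 = 1].

Definition is_alg_aut (k : fieldType) (A : algType k) (f : A -> A) : Prop :=
  is_alg_hom f /\ bijective f.

(* (A, x, y) is a presentation of k<x,y>/(yx - xy = x^N):
   the relation holds and (A,x,y) satisfies the universal property. *)
Definition is_A_N (k : fieldType) (N : nat) (A : algType k) (x y : A) : Prop :=
  y * x - x * y = x ^+ N /\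
  forall (B : algType k) (a b : B), b * a - a * b = a ^+ N ->
    (exists h : A -> B, [/\ is_alg_hom h, h x = a & h y = b]) /\
    (forall h1 h2 : A -> B, is_alg_hom h1 -> is_alg_hom h2 ->
       h1 x = h2 x -> h1 y = h2 y -> h1 =1 h2).

Definition polyA (k : fieldType) (A : algType k) (x : A) (f : {poly k}) : A :=
  \sum_(i < size f) f`_i *: x ^+ i.

(* g . lambda := g(lambda x) *)
Definition poly_scale (k : fieldType) (g : {poly k}) (l : k) : {poly k} :=
  \poly_(i < size g) (l ^+ i * g`_i).

Definition bowtie_mul (k : fieldType) (N : nat) (p q : {poly k} * k) : {poly k} * k :=
  (q.2 ^+ N.-1 *: p.1 + poly_scale q.1 p.2, p.2 * q.2).

Definition is_phi (k : fieldType) (N : nat) (A : algType k) (x y : A)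
  (f : {poly k}) (l : k) (phi : A -> A) : Prop :=
  [/\ is_alg_aut phi, phi x = l *: x & phi y = l ^+ N.-1 *: y + polyA x f].

(* The images λx and λ^(N-1) y + f(x) satisfy the defining relation because
   f(x) commutes with x, so the universal property gives a unique endomorphism
   φ_(f,λ).  Composition of these endomorphisms follows the product of
   k[x] ⋈ k^×; in particular φ_(f,λ) has the endomorphism of the inverse pair
   as inverse, and the map is injective since k[x] embeds in A.

   For surjectivity, the normally ordered monomials x^i y^j form a basis of A
   (spanning by the universal property, independence through a faithful
   representation on k[X, Y]).  Comparing leading terms in y shows that A is a
   domain whose units are scalars and, in characteristic 0, that the
   centraliser of x is k[x].  The morphism A → k[X], x ↦ 0, y ↦ X has kernel
   xA and kills ψ(x), since ψ(x)^N is a commutator; hence ψ(x) = x u and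
   ψ^-1(x) = x v, so u ψ(v) = 1 and ψ(x) = c x.  Then ψ(y) - c^(N-1) y
   commutes with x and therefore lies in k[x]. *)

From HB Require Import structures.
From mathcomp Require Import all_boot all_algebra boolp ring zify.
Import GRing.Theory.
Set Implicit Arguments. Unset Strict Implicit. Unset Printing Implicit Defensive.
Local Open Scope ring_scope.

Section AlgHom.
Variables (k : fieldType) (B C : algType k) (h : B -> C).
Hypothesis hh : is_alg_hom h.

Lemma alg_homD : {morph h : a b / a + b}. Proof. by case: hh. Qed.
Lemma alg_hom0 : h 0 = 0.
Proof. by apply: (addIr (h 0)); rewrite -alg_homD !add0r. Qed.

(* Local, since these instances depend on the hypothesis [hh]. *)
#[local] HB.instance Definition _ := GRing.isNmodMorphism.Build B C h (alg_hom0, alg_homD).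
#[local] HB.instance Definition _ :=
  GRing.isMonoidMorphism.Build B C h (let: And4 _ _ hM h1 := hh in (h1, hM)).
#[local] HB.instance Definition _ :=
  GRing.isScalable.Build k B C *:%R h (let: And4 _ hZ _ _ := hh in hZ).

Lemma alg_homB a b : h (a - b) = h a - h b. Proof. exact: rmorphB. Qed.
Lemma alg_homZ c a : h (c *: a) = c *: h a. Proof. exact: linearZ. Qed.
Lemma alg_homM a b : h (a * b) = h a * h b. Proof. exact: rmorphM. Qed.
Lemma alg_hom1 : h 1 = 1. Proof. exact: rmorph1. Qed.
Lemma alg_homX a n : h (a ^+ n) = h a ^+ n. Proof. exact: rmorphXn. Qed.
Lemma alg_hom_sum n (F : 'I_n -> B) : h (\sum_(i < n) F i) = \sum_(i < n) h (F i).
Proof. exact: rmorph_sum. Qed.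
Lemma alg_hom_polyA a q : h (polyA a q) = polyA (h a) q.
Proof. by rewrite linear_sum; apply: eq_bigr => i _; rewrite linearZ rmorphXn. Qed.

End AlgHom.

Lemma alg_hom_id (k : fieldType) (B : algType k) : is_alg_hom (@id B).
Proof. by []. Qed.

Lemma alg_hom_comp (k : fieldType) (B C D : algType k) (f : B -> C) (g : C -> D) :
  is_alg_hom f -> is_alg_hom g -> is_alg_hom (g \o f).
Proof.
move=> hf hg; split=> [a b|c a|a b|] /=.
- by rewrite !alg_homD.
- by rewrite !alg_homZ.
- by rewrite !alg_homM.
- by rewrite !alg_hom1.
Qed.

Lemma alg_hom_can (k : fieldType) (B C : algType k) (h : B -> C) (g : C -> B) :
  is_alg_hom h -> cancel h g -> cancel g h -> is_alg_hom g.
Proof.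
move=> hh hK Kh; have h_inj := can_inj hK.
split=> [a b|c a|a b|]; apply: h_inj.
- by rewrite (alg_homD hh) !Kh.
- by rewrite (alg_homZ hh) !Kh.
- by rewrite (alg_homM hh) !Kh.
- by rewrite (alg_hom1 hh) Kh.
Qed.

Section PolyA.
Variables (k : fieldType) (B : algType k) (a : B).

Lemma polyA_horner_alg : polyA a =1 horner_alg a.
Proof.
move=> f; rewrite /horner_alg /horner_morph horner_coef size_map_poly.
by apply: eq_bigr => i _; rewrite coef_map /= mulr_algl.
Qed.

Lemma polyA_is_nmod_morphism : nmod_morphism (polyA a).
Proof.
by rewrite /nmod_morphism; split=> [|f g]; rewrite !polyA_horner_alg ?rmorph0 ?rmorphD.
Qed.

Lemma polyA_is_monoid_morphism : monoid_morphism (polyA a).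
Proof.
by rewrite /monoid_morphism; split=> [|f g]; rewrite !polyA_horner_alg ?rmorph1 ?rmorphM.
Qed.

Lemma polyAC c : polyA a c%:P = c%:A. Proof. by rewrite polyA_horner_alg horner_algC. Qed.
Lemma polyAX : polyA a 'X = a. Proof. by rewrite polyA_horner_alg horner_algX. Qed.

End PolyA.

HB.instance Definition _ (k : fieldType) (B : algType k) (a : B) :=
  GRing.isNmodMorphism.Build {poly k} B (polyA a) (polyA_is_nmod_morphism a).
HB.instance Definition _ (k : fieldType) (B : algType k) (a : B) :=
  GRing.isMonoidMorphism.Build {poly k} B (polyA a) (polyA_is_monoid_morphism a).

Lemma polyA_is_scalable (k : fieldType) (B : algType k) (a : B) : scalable (polyA a).
Proof. by move=> c f; rewrite -mul_polyC rmorphM /= polyAC mulr_algl. Qed.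

HB.instance Definition _ (k : fieldType) (B : algType k) (a : B) :=
  GRing.isScalable.Build k {poly k} B *:%R (polyA a) (polyA_is_scalable a).

Section PolyATheory.
Variables (k : fieldType) (B : algType k) (a : B).
Implicit Types f : {poly k}.

Lemma polyA_comm f : polyA a f * a = a * polyA a f.
Proof. by rewrite -{2 3}(polyAX a) -!rmorphM /= mulrC. Qed.
Lemma polyA_at0 f : polyA (0 : B) f = (f`_0)%:A.
Proof. by rewrite polyA_horner_alg /horner_alg /horner_morph horner_coef0 coef_map. Qed.
Lemma polyA_wide n f : (size f <= n)%N -> polyA a f = \sum_(i < n) f`_i *: a ^+ i.
Proof.
move=> le_f_n; rewrite /polyA (big_ord_widen _ (fun i => f`_i *: a ^+ i) le_f_n).
rewrite big_mkcond; apply: eq_bigr => i _; case: ltnP => // /(nth_default 0) ->.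
by rewrite scale0r.
Qed.

End PolyATheory.

Section PolyScale.
Variable k : fieldType.
Implicit Types g : {poly k}.

Lemma coef_poly_scale g l i : (poly_scale g l)`_i = l ^+ i * g`_i.
Proof. by rewrite coef_poly; case: ltnP => // /(nth_default 0) ->; rewrite mulr0. Qed.

Lemma poly_scaleZ g c l : poly_scale (c *: g) l = c *: poly_scale g l.
Proof. by apply/polyP => i; rewrite coefZ !coef_poly_scale coefZ mulrCA. Qed.

Lemma poly_scaleM g l m : poly_scale (poly_scale g l) m = poly_scale g (l * m).
Proof. by apply/polyP => i; rewrite !coef_poly_scale mulrA exprMn (mulrC (m ^+ i)). Qed.

Lemma poly_scale1 g : poly_scale g 1 = g.
Proof. by apply/polyP => i; rewrite coef_poly_scale expr1n mul1r. Qed.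

Lemma polyA_scale (B : algType k) (a : B) g l :
  polyA (l *: a) g = polyA a (poly_scale g l).
Proof.
rewrite [RHS](polyA_wide _ (size_poly _ _)).
by apply: eq_bigr => i _; rewrite coef_poly_scale exprZn scalerA mulrC.
Qed.

End PolyScale.

Definition bowtie_inv (k : fieldType) (N : nat) (p : {poly k} * k) : {poly k} * k :=
  (poly_scale (- p.2^-1 ^+ N.-1 *: p.1) p.2^-1, p.2^-1).

Lemma bowtie_mulV (k : fieldType) (N : nat) (p : {poly k} * k) :
  p.2 != 0 -> bowtie_mul N p (bowtie_inv N p) = (0, 1).
Proof.
case: p => f l /= nz_l; rewrite /bowtie_mul /= mulfV // poly_scaleM mulVf //.
by rewrite poly_scaleZ poly_scale1 scaleNr subrr.
Qed.

Lemma bowtie_mulVl (k : fieldType) (N : nat) (p : {poly k} * k) :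
  p.2 != 0 -> bowtie_mul N (bowtie_inv N p) p = (0, 1).
Proof.
case: p => f l /= nz_l; rewrite /bowtie_mul /= mulVf // poly_scaleZ scalerA.
by rewrite mulrN -exprMn mulfV // expr1n scaleN1r addNr.
Qed.

Section Generation.
Variables (k : fieldType) (N : nat) (A : algType k) (x y : A).
Hypothesis presentA : is_A_N N x y.
Variable S : {pred A}.
Hypothesis S_subalg : GRing.subalg_closed S.
Hypotheses (Sx : x \in S) (Sy : y \in S).

Record subalg_of := SubalgOf { subalg_val : A; _ : subalg_val \in S }.
HB.instance Definition _ := [isSub for subalg_val].
HB.instance Definition _ := [Choice of subalg_of by <:].
#[local] HB.instance Definition _ :=
  GRing.SubChoice_isSubAlgebra.Build k A S subalg_of S_subalg.

Lemma presentation_generated a : a \in S.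
Proof.
have [yx_rel univ] := presentA.
pose xS := SubalgOf Sx; pose yS := SubalgOf Sy.
have val_hom : is_alg_hom (subalg_val : subalg_of -> A) by [].
have relS : yS * xS - xS * yS = xS ^+ N.
  by apply: val_inj; rewrite /= yx_rel (alg_homX val_hom).
have [[h [hh hx hy]] _] := univ _ _ _ relS.
have <- : subalg_val (h a) = a.
  apply: (univ _ _ _ yx_rel).2 (alg_hom_comp hh val_hom) (alg_hom_id A) _ _ a.
  - by rewrite /= hx.
  - by rewrite /= hy.
exact: valP.
Qed.

End Generation.

Section BivariateEndomorphisms.
Variables (k : fieldType) (N : nat).
Local Notation V := {poly {poly k}}.

Record bend := Bend { bend_fun :> V -> V; bend_linear : linear bend_fun }.

HB.instance Definition _ (e : bend) :=
  GRing.isLinear.Build {poly k} V V *:%R e (bend_linear e).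

Lemma bendP (e1 e2 : bend) : e1 =1 e2 -> e1 = e2.
Proof.
case: e1 e2 => f1 l1 [f2 l2] /= /funext eq_f; case: _ / eq_f in l2 *.
by rewrite (Prop_irrelevance l1 l2).
Qed.

HB.instance Definition _ := gen_eqMixin bend.
HB.instance Definition _ := gen_choiceMixin bend.

Fact bend0_linear : linear (fun _ : V => 0 : V).
Proof. by move=> a u v; rewrite scaler0 addr0. Qed.
Fact bendD_linear (e1 e2 : bend) : linear (fun v => e1 v + e2 v).
Proof. by move=> a u v; rewrite !linearP scalerDr addrACA. Qed.
Fact bendN_linear (e : bend) : linear (fun v => - e v).
Proof. by move=> a u v; rewrite linearP opprD scalerN. Qed.
Fact bend1_linear : linear (@id V). Proof. by []. Qed.
Fact bendM_linear (e1 e2 : bend) : linear (fun v => e1 (e2 v)).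
Proof. by move=> a u v; rewrite !linearP. Qed.
Fact bendZ_linear (c : k) (e : bend) : linear (fun v => c%:P *: e v).
Proof. by move=> a u v; rewrite linearP scalerDr !scalerA mulrC. Qed.

Definition bend0 := Bend bend0_linear.
Definition bendD e1 e2 := Bend (bendD_linear e1 e2).
Definition bendN e := Bend (bendN_linear e).
Definition bend1 := Bend bend1_linear.
Definition bendM e1 e2 := Bend (bendM_linear e1 e2).
Definition bendZ c e := Bend (bendZ_linear c e).

Fact bendDA : associative bendD.
Proof. by move=> *; apply: bendP => v /=; rewrite addrA. Qed.
Fact bendDC : commutative bendD.
Proof. by move=> *; apply: bendP => v /=; rewrite addrC. Qed.
Fact bend0D : left_id bend0 bendD.
Proof. by move=> *; apply: bendP => v /=; rewrite add0r. Qed.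
Fact bendNK : left_inverse bend0 bendN bendD.
Proof. by move=> *; apply: bendP => v /=; rewrite addNr. Qed.
HB.instance Definition _ := GRing.isZmodule.Build bend bendDA bendDC bend0D bendNK.

Fact bendMA : associative bendM. Proof. by move=> *; apply: bendP. Qed.
Fact bend1M : left_id bend1 bendM. Proof. by move=> *; apply: bendP. Qed.
Fact bendM1 : right_id bend1 bendM. Proof. by move=> *; apply: bendP. Qed.
Fact bendMDl : left_distributive bendM bendD. Proof. by move=> *; apply: bendP. Qed.
Fact bendMDr : right_distributive bendM bendD.
Proof. by move=> e *; apply: bendP => v /=; rewrite linearD. Qed.
Fact bend1_neq0 : bend1 != bend0.
Proof. by apply/eqP => /(congr1 (fun e : bend => e 1)) /eqP; rewrite oner_eq0. Qed.
HB.instance Definition _ :=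
  GRing.Zmodule_isNzRing.Build bend bendMA bend1M bendM1 bendMDl bendMDr bend1_neq0.

Fact bendZA a b e : bendZ a (bendZ b e) = bendZ (a * b) e.
Proof. by apply: bendP => v /=; rewrite scalerA polyCM. Qed.
Fact bendZ1 : left_id 1 bendZ.
Proof. by move=> e; apply: bendP => v /=; rewrite scale1r. Qed.
Fact bendZDr : right_distributive bendZ +%R.
Proof. by move=> *; apply: bendP => v /=; rewrite scalerDr. Qed.
Fact bendZDl e : {morph bendZ^~ e : a b / a + b}.
Proof. by move=> *; apply: bendP => v /=; rewrite polyCD scalerDl. Qed.
HB.instance Definition _ :=
  GRing.Zmodule_isLmodule.Build k bend bendZA bendZ1 bendZDr bendZDl.
Fact bendZAl a (e1 e2 : bend) : a *: (e1 * e2) = (a *: e1) * e2.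
Proof. by apply: bendP. Qed.
HB.instance Definition _ := GRing.Lmodule_isLalgebra.Build k bend bendZAl.
Fact bendZAr a (e1 e2 : bend) : a *: (e1 * e2) = e1 * (a *: e2).
Proof. by apply: bendP => v /=; rewrite linearZ. Qed.
HB.instance Definition _ := GRing.Lalgebra_isAlgebra.Build k bend bendZAr.

Lemma bend_sum n (F : 'I_n -> bend) v : (\sum_(i < n) F i) v = \sum_(i < n) F i v.
Proof. by elim/big_rec2: _ => // i e1 e2 _ <-. Qed.

(* x acts as multiplication by X and y as X^N d/dX + Y, so the normally
   ordered element sum_j q_j(x) y^j sends 1 to sum_j q_j(X) Y^j. *)
Fact mulX_linear : linear (fun v : V => v * 'X).
Proof. by move=> a u v; rewrite mulrDl scalerAl. Qed.
Fact weyl_linear : linear (fun v : V => 'X^N * v^`() + 'Y * v).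
Proof.
by move=> a u v; rewrite derivD derivZ !mulrDr addrACA -!scalerAr scalerDr.
Qed.

Definition bend_X := Bend mulX_linear.
Definition bend_D := Bend weyl_linear.

Lemma bend_Xn n v : (bend_X ^+ n) v = v * 'X^n.
Proof.
elim: n => [|n IH]; first by rewrite expr0 mulr1.
by rewrite exprS /= IH exprS mulrA mulrAC.
Qed.

Lemma bend_relation : bend_D * bend_X - bend_X * bend_D = bend_X ^+ N.
Proof.
by apply: bendP => v; rewrite bend_Xn /= derivM derivX; ring.
Qed.

Lemma bend_Dn_1 j : (bend_D ^+ j) 1 = 'Y ^+ j.
Proof.
elim: j => [|j IH] //; rewrite exprS /= IH.
by rewrite -rmorphXn derivC mulr0 add0r rmorphXn -exprS.
Qed.

Lemma bend_polyA q v : polyA bend_X q v = v * q^:P.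
Proof.
rewrite /polyA bend_sum /map_poly poly_def mulr_sumr; apply: eq_bigr => i _ /=.
by rewrite bend_Xn scalerAr.
Qed.

Lemma bend_monomial q j : (polyA bend_X q * bend_D ^+ j) 1 = q^:P * 'Y ^+ j.
Proof. by rewrite /= bend_Dn_1 bend_polyA mulrC. Qed.

End BivariateEndomorphisms.

Lemma swapXY_sum (R : nzRingType) (P : {poly {poly R}}) :
  swapXY P = \sum_(j < size P) (P`_j)^:P * 'Y ^+ j.
Proof.
rewrite -{1}[P]coefK poly_def rmorph_sum; apply: eq_bigr => j _.
by rewrite -mul_polyC rmorphM rmorphXn /= swapXY_polyC swapXY_X.
Qed.

Section Relation.
Variables (k : fieldType) (N : nat) (A : algType k) (x y : A).
Hypothesis yx_rel : y * x - x * y = x ^+ N.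
Local Notation pA := (polyA x).
Implicit Types (q : {poly k}) (P Q : {poly {poly k}}).

Definition nderiv q := 'X^N * q^`().

Lemma nderiv0 : nderiv 0 = 0. Proof. by rewrite /nderiv deriv0 mulr0. Qed.

Lemma yx_comm : y * x = x * y + x ^+ N.
Proof. by rewrite -yx_rel addrC subrK. Qed.

Lemma polyA_Xn n : pA 'X^n = x ^+ n. Proof. by rewrite rmorphXn /= polyAX. Qed.

Lemma y_polyA q : y * pA q = pA q * y + pA (nderiv q).
Proof.
rewrite /nderiv rmorphM /= polyA_Xn.
elim/poly_ind: q => [|p c IH]; first by rewrite deriv0 !rmorph0 !mulr0 mul0r addr0.
rewrite derivMXaddC !rmorphD !rmorphM /= polyAC polyAX mulrDr mulrA IH mulrDl.
rewrite -mulrA yx_comm mulr_algr !mulrDr mulrDl mulr_algl !mulrA.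
rewrite -polyA_Xn -!rmorphM /= (mulrC p) !rmorphM /= polyA_Xn -!addrA; congr (_ + _).
by rewrite [RHS]addrC -addrA.
Qed.

Definition evxy P := \sum_(j < size P) pA P`_j * y ^+ j.

Lemma evxy_wide n P : (size P <= n)%N -> evxy P = \sum_(j < n) pA P`_j * y ^+ j.
Proof.
move=> le_P_n; rewrite /evxy (big_ord_widen _ (fun j => pA P`_j * y ^+ j) le_P_n).
rewrite big_mkcond; apply: eq_bigr => j _; case: ltnP => // /(nth_default 0) ->.
by rewrite rmorph0 mul0r.
Qed.

Lemma evxy_is_zmod_morphism : zmod_morphism evxy.
Proof.
move=> P Q; pose n := maxn (size P) (size Q).
rewrite (@evxy_wide n P) ?leq_maxl // (@evxy_wide n Q) ?leq_maxr // -sumrB.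
rewrite (@evxy_wide n) ?(leq_trans (size_polyD _ _)) ?size_polyN //.
by apply: eq_bigr => j _; rewrite coefB rmorphB mulrBl.
Qed.

HB.instance Definition _ :=
  GRing.isZmodMorphism.Build {poly {poly k}} A evxy evxy_is_zmod_morphism.

Lemma evxyZ q P : evxy (q *: P) = pA q * evxy P.
Proof.
rewrite (@evxy_wide (size P)) ?size_scale_leq // mulr_sumr.
by apply: eq_bigr => j _; rewrite coefZ rmorphM mulrA.
Qed.

Lemma evxyC q : evxy q%:P = pA q.
Proof. by rewrite (@evxy_wide 1) ?size_polyC ?leq_b1 // big_ord1 coefC mulr1. Qed.

Lemma evxyX : evxy 'X = y.
Proof.
rewrite (@evxy_wide 2) ?size_polyX // big_ord_recr big_ord1 /= !coefX /=.
by rewrite rmorph0 rmorph1 mul0r add0r mul1r expr1.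
Qed.

Lemma evxy_size1 P : (size P <= 1)%N -> evxy P = pA P`_0.
Proof. by move=> /size1_polyC ->; rewrite evxyC coefC. Qed.

Lemma evxyMXn P n : evxy (P * 'X^n) = evxy P * y ^+ n.
Proof.
rewrite (@evxy_wide (size P + n)) ?(leq_trans (size_polyMleq _ _)) ?size_polyXn ?addnS //.
rewrite addnC big_split_ord /= big1 ?add0r => [|j _]; last first.
  by rewrite coefMXn ltn_ord rmorph0 mul0r.
rewrite /evxy mulr_suml; apply: eq_bigr => j _.
by rewrite coefMXn ltnNge leq_addr /= addKn -mulrA -exprD addnC.
Qed.

Lemma y_evxy P : y * evxy P = evxy (P * 'X) + evxy (map_poly nderiv P).
Proof.
rewrite -(expr1 ('X : {poly {poly k}})) evxyMXn (@evxy_wide (size P) (map_poly _ _)) ?size_poly //.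
rewrite /evxy mulr_sumr mulr_suml -big_split; apply: eq_bigr => j _.
by rewrite coef_map_id0 ?nderiv0 // mulrA y_polyA mulrDl expr1 -!mulrA -exprS -exprSr.
Qed.

Definition yfil d : {pred A} :=
  fun a => `[< exists2 P : {poly {poly k}}, (size P <= d)%N & a = evxy P >].

Lemma yfilP d a :
  reflect (exists2 P : {poly {poly k}}, (size P <= d)%N & a = evxy P) (a \in yfil d).
Proof. exact: asboolP. Qed.

Lemma yfil_zmod_closed d : zmod_closed (yfil d).
Proof.
split=> [|_ _ /yfilP[P sP ->] /yfilP[Q sQ ->]]; apply/yfilP.
  by exists 0; rewrite ?size_poly0 ?raddf0.
exists (P - Q); last by rewrite raddfB.
by rewrite (leq_trans (size_polyD _ _)) // size_polyN geq_max sP.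
Qed.

HB.instance Definition _ d := GRing.isZmodClosed.Build A (yfil d) (yfil_zmod_closed d).

Lemma yfil_evxy P : evxy P \in yfil (size P).
Proof. by apply/yfilP; exists P. Qed.

Lemma yfilS d e : (d <= e)%N -> {subset yfil d <= yfil e}.
Proof. by move=> le_de _ /yfilP[P sP ->]; apply/yfilP; exists P; rewrite ?(leq_trans sP). Qed.

Lemma yfil0_eq0 a : a \in yfil 0 -> a = 0.
Proof. by case/yfilP=> P; rewrite leqn0 size_poly_eq0 => /eqP-> ->; rewrite raddf0. Qed.

Lemma yfil_polyA q d a : a \in yfil d -> pA q * a \in yfil d.
Proof.
case/yfilP=> P sP ->; apply/yfilP; exists (q *: P); last by rewrite evxyZ.
exact: leq_trans (size_scale_leq _ _) sP.
Qed.

Lemma yfil_mulyn d n a : a \in yfil d -> a * y ^+ n \in yfil (d + n).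
Proof.
case/yfilP=> P sP ->; apply/yfilP; exists (P * 'X^n); last by rewrite evxyMXn.
by rewrite (leq_trans (size_polyMleq _ _)) // size_polyXn addnS leq_add2r.
Qed.

Lemma yfil_y d a : a \in yfil d -> y * a \in yfil d.+1.
Proof.
case/yfilP=> P sP ->; rewrite y_evxy rpredD //.
  rewrite -[d.+1]addn1 -(expr1 ('X : {poly {poly k}})) evxyMXn yfil_mulyn //.
  exact: (yfilS sP (yfil_evxy P)).
apply: yfilS (yfil_evxy _); rewrite (leq_trans (size_poly _ _)) ?(leq_trans sP) //.
Qed.

Lemma yfil_monomial q j : pA q * y ^+ j \in yfil j.+1.
Proof.
rewrite -add1n yfil_mulyn // -evxyC (yfilS _ (yfil_evxy _)) //.
by rewrite size_polyC leq_b1.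
Qed.

Lemma yfil_ymul m n a : a \in yfil n -> y ^+ m * a \in yfil (m + n).
Proof.
by move=> fa; elim: m => [|m IH]; rewrite ?mul1r // exprS -mulrA addSn yfil_y.
Qed.

Lemma yfil_mul i j a b : a \in yfil i -> b \in yfil j -> a * b \in yfil (i + j).-1.
Proof.
case: i => [/yfil0_eq0-> _|i /yfilP[P sP ->] fb]; first by rewrite mul0r rpred0.
rewrite /evxy mulr_suml rpred_sum // => l _; rewrite -mulrA yfil_polyA //.
by apply: yfilS (yfil_ymul l fb); rewrite leq_add2r -ltnS (leq_trans (ltn_ord l)).
Qed.

Lemma ySn_polyA m q : exists2 r, r \in yfil m &
  y ^+ m.+1 * pA q = pA q * y ^+ m.+1 + pA (m.+1%:R *: nderiv q) * y ^+ m + r.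
Proof.
elim: m => [|m [r fr E]].
  by exists 0; rewrite ?rpred0 // addr0 scale1r expr1 mulr1 y_polyA.
exists (pA (nderiv (m.+1%:R *: nderiv q)) * y ^+ m + y * r).
  by rewrite rpredD ?yfil_monomial ?yfil_y.
rewrite exprS -mulrA E !mulrDr !mulrA !y_polyA !mulrDl -!mulrA -!exprS !addrA.
rewrite -(addrA (pA q * _)) -mulrDl -rmorphD /= -{1}[nderiv q]scale1r -scalerDl.
by rewrite [1 + _]addrC natr1.
Qed.

Lemma yn_polyA m q : exists2 r, r \in yfil m & y ^+ m * pA q = pA q * y ^+ m + r.
Proof.
case: m => [|m]; first by exists 0; rewrite ?rpred0 // expr0 mulr1 mul1r addr0.
have [r fr ->] := ySn_polyA m q; exists (pA (m.+1%:R *: nderiv q) * y ^+ m + r).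
  by rewrite rpredD ?yfil_monomial ?(yfilS _ fr).
by rewrite addrA.
Qed.

Lemma evxy_lead P : exists2 r, r \in yfil (size P).-1 &
  evxy P = pA (lead_coef P) * y ^+ (size P).-1 + r.
Proof.
rewrite /lead_coef /evxy; case sP: (size P) => [|m].
  by exists 0; rewrite ?rpred0 // big_ord0 nth_default ?sP // rmorph0 mul0r addr0.
exists (\sum_(j < m) pA P`_j * y ^+ j); last by rewrite big_ord_recr addrC.
by rewrite rpred_sum // => j _; apply: yfilS (yfil_monomial _ _).
Qed.

Lemma commx_ypow j : y ^+ j * x - x * y ^+ j \in yfil j.
Proof.
case: j => [|j]; first by rewrite expr0 mulr1 mul1r subrr rpred0.
have [r fr] := ySn_polyA j 'X; rewrite polyAX => ->.
by rewrite addrAC [_ - x * _]addrAC subrr add0r rpredD ?yfil_monomial ?(yfilS _ fr).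
Qed.

Lemma commx_yfil d a : a \in yfil d -> a * x - x * a \in yfil d.-1.
Proof.
case/yfilP=> P sP ->; rewrite /evxy mulr_suml mulr_sumr -sumrB rpred_sum // => j _.
rewrite -mulrA (mulrA x) -polyA_comm -mulrA -mulrBr yfil_polyA //.
apply: yfilS (commx_ypow j); rewrite -ltnS (leq_trans (ltn_ord j)) //.
by rewrite (leq_trans sP) // leqSpred.
Qed.

Definition phi_hom f l (h : A -> A) :=
  [/\ is_alg_hom h, h x = l *: x & h y = l ^+ N.-1 *: y + pA f].

Lemma phi_hom_id : phi_hom 0 1 id.
Proof.
by split; [exact: alg_hom_id | rewrite scale1r | rewrite expr1n scale1r rmorph0 addr0].
Qed.

Lemma phi_hom_comp (p q : {poly k} * k) h1 h2 :
  phi_hom p.1 p.2 h1 -> phi_hom q.1 q.2 h2 ->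
  phi_hom (bowtie_mul N p q).1 (bowtie_mul N p q).2 (h1 \o h2).
Proof.
case: p q => f l [g m] [hh1 h1x h1y] [hh2 h2x h2y]; split=> /=; first exact: alg_hom_comp.
  by rewrite h2x (alg_homZ hh1) h1x scalerA mulrC.
rewrite h2y (alg_homD hh1) (alg_homZ hh1) (alg_hom_polyA hh1) h1x h1y polyA_scale.
by rewrite scalerDr scalerA rmorphD /= linearZ /= addrA exprMn mulrC.
Qed.

Lemma phi_relation f l : (1 <= N)%N ->
  (l ^+ N.-1 *: y + pA f) * (l *: x) - (l *: x) * (l ^+ N.-1 *: y + pA f) = (l *: x) ^+ N.
Proof.
move=> N_gt0; rewrite mulrDl mulrDr opprD addrACA.
have -> : pA f * (l *: x) - l *: x * pA f = 0 by rewrite -scalerAr -scalerAl polyA_comm subrr.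
rewrite addr0 -!scalerAr -!scalerAl !scalerA [l ^+ N.-1 * l]mulrC -scalerBr yx_rel.
by rewrite -exprS prednK // exprZn.
Qed.

Section Presentation.
Hypothesis univ : forall (B : algType k) (a b : B), b * a - a * b = a ^+ N ->
  (exists h : A -> B, [/\ is_alg_hom h, h x = a & h y = b]) /\
  (forall h1 h2 : A -> B, is_alg_hom h1 -> is_alg_hom h2 ->
     h1 x = h2 x -> h1 y = h2 y -> h1 =1 h2).

Lemma evxy_eq0 P : evxy P = 0 -> P = 0.
Proof.
have [[h [hh hx hy]] _] := univ (bend_relation k N).
move=> /(congr1 (fun a => h a 1)); rewrite (alg_hom0 hh) /evxy (alg_hom_sum hh) bend_sum.
under eq_bigr do rewrite (alg_homM hh) (alg_homX hh) (alg_hom_polyA hh) hx hy bend_monomial.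
by rewrite -swapXY_sum /= => /eqP; rewrite swapXY_eq0 => /eqP.
Qed.

Lemma evxy_inj : injective evxy.
Proof. by move=> P Q eqPQ; apply/subr0_eq/evxy_eq0; rewrite raddfB /= eqPQ subrr. Qed.

Lemma polyA_inj : injective pA.
Proof. by move=> f g; rewrite -!evxyC => /evxy_inj /polyC_inj. Qed.

Lemma x_neq0 : x != 0.
Proof. by rewrite -(polyAX x) -(rmorph0 pA) (inj_eq polyA_inj) polyX_eq0. Qed.

Lemma lead_term_neq0 q d r : q != 0 -> r \in yfil d -> pA q * y ^+ d + r != 0.
Proof.
move=> nz_q /yfilP[R sR ->]; apply: contra nz_q => /eqP.
rewrite -evxyC -evxyMXn -raddfD => /evxy_eq0 /(congr1 (coefp d)) /=.
by rewrite coefD coefMXn ltnn subnn coefC eqxx (nth_default 0 sR) addr0 coef0 => ->.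
Qed.

Lemma evxyM_lead P Q : exists2 r, r \in yfil ((size P).-1 + (size Q).-1) &
  evxy P * evxy Q =
    pA (lead_coef P * lead_coef Q) * y ^+ ((size P).-1 + (size Q).-1) + r.
Proof.
set m := (size P).-1; set n := (size Q).-1.
have [r1 f1 ->] := evxy_lead P; have [r2 f2 E2] := evxy_lead Q.
have [r3 f3 E3] := yn_polyA m (lead_coef Q).
exists (pA (lead_coef P) * (r3 * y ^+ n) + pA (lead_coef P) * (y ^+ m * r2)
        + r1 * evxy Q).
  rewrite !rpredD ?yfil_polyA ?yfil_mulyn ?yfil_ymul //.
  apply: yfilS (yfil_mul f1 (yfil_evxy Q)) => /=.
  by rewrite /n; case: (size Q) => [|s]; rewrite ?addn0 ?leq_pred ?addnS.
rewrite mulrDl {1}E2 -!mulrA mulrDr (mulrA (y ^+ m)) E3 mulrDl !mulrDr !mulrA -rmorphM.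
by rewrite -!mulrA -exprD !addrA.
Qed.

Lemma evxy_surj a : exists P, a = evxy P.
Proof.
pose S : {pred A} := fun a => `[< exists P, a = evxy P >].
have S_subalg : GRing.subalg_closed S.
  split; first by apply/asboolP; exists 1; rewrite evxyC rmorph1.
    move=> c _ _ /asboolP[P ->] /asboolP[Q ->]; apply/asboolP.
    by exists (c%:P *: P + Q); rewrite raddfD /= evxyZ polyAC mulr_algl.
  move=> _ _ /asboolP[P ->] /asboolP[Q ->]; apply/asboolP.
  by have /yfilP[R _ ->] := yfil_mul (yfil_evxy P) (yfil_evxy Q); exists R.
have Sx : x \in S by apply/asboolP; exists 'X%:P; rewrite evxyC polyAX.
have Sy : y \in S by apply/asboolP; exists 'X; rewrite evxyX.
exact/asboolP/(presentation_generated (conj yx_rel univ) S_subalg Sx Sy).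
Qed.

Lemma mul_eq0 (a b : A) : a * b = 0 -> a = 0 \/ b = 0.
Proof.
have [P ->] := evxy_surj a; have [Q ->] := evxy_surj b.
have [->|nz_P] := eqVneq P 0; first by left; rewrite raddf0.
have [->|nz_Q] := eqVneq Q 0; first by right; rewrite raddf0.
have [r fr ->] := evxyM_lead P Q; move/eqP; rewrite (negbTE (lead_term_neq0 _ fr)) //.
by rewrite mulf_neq0 ?lead_coef_eq0.
Qed.

Lemma unit_scalar (u w : A) : u * w = 1 -> exists2 c, c != 0 & u = c%:A.
Proof.
have [P ->] := evxy_surj u; have [Q ->] := evxy_surj w.
have [->|nz_P] := eqVneq P 0; first by rewrite raddf0 mul0r => /eqP; rewrite eq_sym oner_eq0.
have [->|nz_Q] := eqVneq Q 0; first by rewrite raddf0 mulr0 => /eqP; rewrite eq_sym oner_eq0.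
move=> uw1; have [r fr E] := evxyM_lead P Q.
have nz_lc : lead_coef P * lead_coef Q != 0 by rewrite mulf_neq0 ?lead_coef_eq0.
have deg0 : ((size P).-1 + (size Q).-1 = 0)%N.
  apply/eqP; apply: contraT; rewrite -lt0n => deg_gt0.
  have f1 : 1 \in yfil ((size P).-1 + (size Q).-1).
    by have := yfilS deg_gt0 (yfil_monomial 1 0); rewrite expr0 mulr1 rmorph1.
  by have := lead_term_neq0 nz_lc (rpredB fr f1); rewrite addrA -E uw1 subrr eqxx.
have [sP sQ] : (size P <= 1)%N /\ (size Q <= 1)%N by move: deg0; lia.
have PQ1 : P`_0 * Q`_0 = 1.
  by apply: polyA_inj; rewrite rmorphM rmorph1 /= -(evxy_size1 sP) -(evxy_size1 sQ).
have : P`_0 \is a GRing.unit by apply/unitrPr; exists Q`_0.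
rewrite poly_unitE => /andP[/eqP s1 u0]; exists (P`_0)`_0; first by rewrite -unitfE.
by rewrite evxy_size1 // {1}[P`_0]size1_polyC ?s1 // polyAC.
Qed.

Lemma commx_polyA a : [pchar k] =i pred0 -> a * x = x * a -> exists q, a = pA q.
Proof.
have [P ->] := evxy_surj a => char0 comm.
have [sP|sP] := leqP (size P) 1; first by exists P`_0; rewrite evxy_size1.
have nz_P : P != 0 by rewrite -size_poly_gt0 (ltn_trans _ sP).
have [r1 f1 E1] := evxy_lead P; rewrite E1 in comm *.
case: (size P) sP f1 comm => [|[|m]] //= _ f1 comm.
have [r3 f3] := ySn_polyA m 'X; rewrite polyAX => E3.
(* The commutator with x lowers the y-degree by exactly one: its leading
   coefficient is (m+1) c X^N, nonzero in characteristic 0. *)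
have nz_lc : lead_coef P * (m.+1%:R *: nderiv 'X) != 0.
  rewrite mulf_neq0 ?lead_coef_eq0 //; last first.
  rewrite scaler_eq0 negb_or /nderiv derivX mulr1 expf_neq0 ?polyX_eq0 // andbT.
  by rewrite (pcharf0P _).1.
have fr : pA (lead_coef P) * r3 + (r1 * x - x * r1) \in yfil m.
  by rewrite rpredD ?yfil_polyA // (commx_yfil f1).
have commY : y ^+ m.+1 * x - x * y ^+ m.+1 = pA (m.+1%:R *: nderiv 'X) * y ^+ m + r3.
  by rewrite E3 addrAC [_ - x * _]addrAC subrr add0r.
case/eqP: (lead_term_neq0 nz_lc fr); move/eqP: comm; rewrite -subr_eq0 => /eqP <-.
rewrite mulrDl mulrDr opprD addrACA -mulrA (mulrA x) -polyA_comm -mulrA -mulrBr commY.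
by rewrite mulrDr rmorphM /= -mulrA [LHS]addrA.
Qed.

Lemma ker_subset_xA (pi : A -> {poly k}) : is_alg_hom pi -> pi x = 0 -> pi y = 'X ->
  forall a, pi a = 0 -> exists b, a = x * b.
Proof.
move=> hpi pix piy a; have [P ->] := evxy_surj a.
have -> : pi (evxy P) = map_poly (coefp 0) P.
  rewrite /evxy (alg_hom_sum hpi) /map_poly poly_def; apply: eq_bigr => j _.
  by rewrite (alg_homM hpi) (alg_homX hpi) (alg_hom_polyA hpi) pix piy polyA_at0 mulr_algl.
move=> P0; exists (evxy (map_poly (drop_poly 1) P)).
rewrite -[x in RHS](polyAX x) -evxyZ; congr evxy.
apply/polyP => j; rewrite coefZ coef_map_id0 ?drop_poly0r //.
have Pj0 : (P`_j)`_0 = 0 by move/polyP/(_ j): P0; rewrite coef_map coef0.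
rewrite -[LHS](poly_take_drop 1) expr1 mulrC [take_poly _ _](_ : _ = 0) ?add0r //.
by apply/polyP => -[|i]; rewrite coef_take_poly coef0.
Qed.

Lemma alg_hom_x_dvd (g : A -> A) : (1 <= N)%N -> is_alg_hom g -> exists u, g x = x * u.
Proof.
move=> N_gt0 hg; have rel0 : 'X * 0 - 0 * 'X = 0 ^+ N :> {poly k}.
  by rewrite mulr0 mul0r subrr expr0n gtn_eqF.
have [[pi [hpi pix piy]] _] := univ rel0; apply: (ker_subset_xA hpi pix piy); apply/eqP.
(* pi (g x) ^+ N is the image of a commutator in the commutative ring k[X]. *)
have : pi (g x) ^+ N == 0.
  rewrite -(alg_homX hpi) -(alg_homX hg) -yx_rel (alg_homB hg) !(alg_homM hg).
  by rewrite (alg_homB hpi) !(alg_homM hpi) mulrC subrr.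
by rewrite expf_eq0 N_gt0.
Qed.

Lemma phi_hom_exists f l : (1 <= N)%N -> exists h, phi_hom f l h.
Proof. by move=> N_gt0; have [[h []]] := univ (phi_relation f l N_gt0); exists h. Qed.

Lemma phi_hom_unique f l h1 h2 : phi_hom f l h1 -> phi_hom f l h2 -> h1 =1 h2.
Proof. by case=> hh1 h1x h1y [hh2 h2x h2y]; apply: (univ yx_rel).2; rewrite ?h1x ?h1y. Qed.

Lemma phi_hom_inj f l g m h1 h2 :
  phi_hom f l h1 -> phi_hom g m h2 -> h1 =1 h2 -> f = g /\ l = m.
Proof.
case=> _ h1x h1y [_ h2x h2y] eq_h.
have eq_lm : l = m.
  have : (l - m) *: x == 0 by rewrite scalerBl -h1x -h2x eq_h subrr.
  by rewrite scaler_eq0 (negbTE x_neq0) orbF subr_eq0 => /eqP.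
by split=> //; apply: polyA_inj; apply: (addrI (m ^+ N.-1 *: y)); rewrite -h2y -eq_h h1y eq_lm.
Qed.

Lemma phi_hom_bij f l h : (1 <= N)%N -> l != 0 -> phi_hom f l h -> bijective h.
Proof.
move=> N_gt0 nz_l hh; set p := bowtie_inv N (f, l).
have [g hg] := phi_hom_exists p.1 p.2 N_gt0; exists g => a.
  have := phi_hom_comp (q := (f, l)) hg hh; rewrite bowtie_mulVl // => hgh.
  exact: phi_hom_unique hgh phi_hom_id a.
have := phi_hom_comp (p := (f, l)) hh hg; rewrite bowtie_mulV // => hhg.
exact: phi_hom_unique hhg phi_hom_id a.
Qed.

Lemma alg_aut_phi_hom psi : [pchar k] =i pred0 -> (1 <= N)%N -> is_alg_aut psi ->
  exists f l, l != 0 /\ phi_hom f l psi.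
Proof.
move=> char0 N_gt0 [hpsi [g psiK gK]]; have hg := alg_hom_can hpsi psiK gK.
have [u Eu] := alg_hom_x_dvd N_gt0 hpsi; have [v Ev] := alg_hom_x_dvd N_gt0 hg.
have : x * (u * psi v - 1) = 0.
  by rewrite mulrBr mulr1 mulrA -Eu -(alg_homM hpsi) -Ev gK subrr.
case/mul_eq0 => [x0|/subr0_eq/unit_scalar[c nz_c Ec]]; first by move/eqP: x_neq0.
have psix : psi x = c *: x by rewrite Eu Ec mulr_algr.
have comm_psiy : psi y * x - x * psi y = c ^+ N.-1 *: x ^+ N.
  apply: (scalerI nz_c); rewrite scalerBr scalerAr scalerAl -psix -!(alg_homM hpsi).
  by rewrite -(alg_homB hpsi) yx_rel (alg_homX hpsi) psix exprZn scalerA -exprS prednK.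
have [f Ef] : exists f, psi y - c ^+ N.-1 *: y = pA f.
  apply: commx_polyA => //; apply/eqP; rewrite -subr_eq0 mulrBl mulrBr.
  by rewrite opprD addrACA -opprD comm_psiy -scalerAl -scalerAr -scalerBr yx_rel subrr.
by exists f, c; split=> //; split=> //; rewrite -Ef addrC subrK.
Qed.

Lemma is_phiP f l h : (1 <= N)%N -> l != 0 -> is_phi N x y f l h <-> phi_hom f l h.
Proof.
move=> N_gt0 nz_l; split=> [[[hh _] hx hy] //|hphi].
by have [hh hx hy] := hphi; split=> //; split=> //; apply: phi_hom_bij hphi.
Qed.

End Presentation.

End Relation.

Theorem proposition2p4 (k : fieldType) (N : nat) (A : algType k) (x y : A) :
  [pchar k] =i pred0 -> (1 <= N)%N -> is_A_N N x y ->
  (forall (f : {poly k}) (l : k), l != 0 ->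
     exists phi : A -> A, is_phi N x y f l phi /\
       forall psi : A -> A, is_phi N x y f l psi -> psi =1 phi) /\
  (forall Phi : {poly k} -> k -> A -> A,
     (forall (f : {poly k}) (l : k), l != 0 -> is_phi N x y f l (Phi f l)) ->
     [/\ (* group homomorphism: product in k[x] ⋈ k^× goes to composition *)
         forall (f g : {poly k}) (l m : k), l != 0 -> m != 0 ->
           Phi (bowtie_mul N (f, l) (g, m)).1 (bowtie_mul N (f, l) (g, m)).2
             =1 Phi f l \o Phi g m,
         (* injective *)
         forall (f g : {poly k}) (l m : k), l != 0 -> m != 0 ->
           Phi f l =1 Phi g m -> f = g /\ l = m
       & (* onto Aut(A) *)
         forall psi : A -> A, is_alg_aut psi ->
           exists (f : {poly k}) (l : k), l != 0 /\ psi =1 Phi f l]).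
Proof.
move=> char0 N_gt0 [yx_rel univ].
have phiP f l h : l != 0 -> is_phi N x y f l h <-> phi_hom N x y f l h.
  exact: is_phiP yx_rel univ f l h N_gt0.
split=> [f l nz_l | Phi PhiP].
  have [h hh] := phi_hom_exists yx_rel univ f l N_gt0.
  exists h; split=> [|psi /(phiP _ _ _ nz_l) hpsi]; first exact/phiP.
  exact: (phi_hom_unique yx_rel univ hpsi hh).
have PhiP' f l : l != 0 -> phi_hom N x y f l (Phi f l) by move=> nz_l; apply/phiP/PhiP.
split=> [f g l m nz_l nz_m | f g l m nz_l nz_m | psi].
- have nz_lm : l * m != 0 by rewrite mulf_neq0.
  have hcomp := phi_hom_comp (p := (f, l)) (q := (g, m)) (PhiP' f l nz_l) (PhiP' g m nz_m).
  exact: (phi_hom_unique yx_rel univ (PhiP' _ _ nz_lm) hcomp).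
- exact: (phi_hom_inj univ (PhiP' f l nz_l) (PhiP' g m nz_m)).
- case/(alg_aut_phi_hom yx_rel univ char0 N_gt0) => f [l [nz_l hpsi]].
  by exists f, l; split=> //; apply: (phi_hom_unique yx_rel univ hpsi (PhiP' f l nz_l)).
Qed.
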